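(* Let $X$ be a first-countable topological space with $X=X_1\sqcup X_2$ (disjoint union), and assume that for every convergent sequence $\bar x=\{x_j\}_{j\in\mathbb{N}}$ contained in $X_1$, the set $L(\bar x)\cap X_2$ has no isolated points, where $L(\bar x)$ is the set of limits of $\bar x$. Then for every subset $S\subseteq X$ that is locally closed (i.e., the intersection of an open and a closed subset of $X$) and Hausdorff in its relative topology, the set $S\cap X_1$ is relatively closed in $S$.
   Context: For a sequence $\bar x=\{x_j\}_{j\in\mathbb{N}}$ in a (not necessarily Hausdorff) topological space, $L(\bar x)$ denotes the set of all points to which the sequence converges. *)

From HB Require Import structures.
From mathcomp Require Import all_boot all_order all_algebra.
From mathcomp Require Import all_classical all_reals all_analysis.
Set Implicit Arguments. Unset Strict Implicit. Unset Printing Implicit Defensive.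
Local Open Scope classical_set_scope.

Definition first_countable (T : topologicalType) : Prop :=
  forall x : T, exists B : nat -> set T,
    (forall n, nbhs x (B n)) /\ (forall U, nbhs x U -> exists n, B n `<=` U).

Definition seq_limits (T : topologicalType) (u : nat -> T) : set T :=
  [set p | u @ \oo --> p].

Definition locally_closed (T : topologicalType) (S : set T) : Prop :=
  exists U C : set T, open U /\ closed C /\ S = U `&` C.

Definition rel_closed_in (T : topologicalType) (S A : set T) : Prop :=
  exists C : set T, closed C /\ A = S `&` C.

From HB Require Import structures.
From mathcomp Require Import all_boot all_order all_algebra.
From mathcomp Require Import all_classical all_reals all_analysis.
Local Open Scope classical_set_scope.

(* Take x in S, in the closure of S ∩ X1, and suppose x lies in X2.  First
   countability yields a sequence u in S ∩ X1 converging to x.  Writing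
   S = U ∩ C, every limit of u lying in the open set U also lies in the closed
   set C, hence in S; limits in the Hausdorff space S are unique, so U meets
   L(u) only at x.  Thus x is an isolated point of L(u) ∩ X2, contradicting
   the hypothesis. *)

Section FirstCountable.
Context {X : topologicalType}.
Hypothesis fcX : first_countable X.

Lemma first_countable_nbhs_seq (x : X) : exists V : nat -> set X,
  (forall n, nbhs x (V n)) /\
  (forall W, nbhs x W -> \forall n \near \oo, V n `<=` W).
Proof.
have [B [nbhsB baseB]] := fcX x.
pose V n := [set y | forall k, (k <= n)%N -> B k y].
exists V; split.
  elim=> [|n IHn].
    by apply: filterS (nbhsB 0%N) => y By k; rewrite leqn0 => /eqP ->.
  apply: filterS (filterI IHn (nbhsB n.+1)) => y [Vy By] k.
  by rewrite leq_eqVlt => /orP[/eqP ->|/Vy].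
move=> W /baseB[k BkW]; exists k => // n /= kn y Vy.
exact/BkW/Vy.
Qed.

Lemma first_countable_closure_seq {A : set X} {x : X} : closure A x ->
  exists u : nat -> X, (forall j, A (u j)) /\ u @ \oo --> x.
Proof.
move=> clAx; have [V [nbhsV baseV]] := first_countable_nbhs_seq x.
have /choice[u uP] : forall n, exists y, A y /\ V n y.
  by move=> n; have [y [Ay Vy]] := clAx _ (nbhsV n); exists y.
exists u; split=> [j|W /baseV]; first by case: (uP j).
by apply: filterS => n /(_ (u n)); apply; case: (uP n).
Qed.

End FirstCountable.

Section LocallyClosedHausdorff.
Context {X : topologicalType} {S : set X}.

Lemma cvg_subspace {u : nat -> X} {p : X} :
  (forall j, S (u j)) -> S p -> u @ \oo --> p ->
  (u : nat -> subspace S) @ \oo --> (p : subspace S).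
Proof.
move=> Su Sp up; apply/(subspace_cvgP _ Sp) => W /up.
by rewrite /= /nbhs /=; apply: filterS => j; apply; exact: Su.
Qed.

Lemma locally_closed_cvg_nbhs {x : X} : locally_closed S -> S x ->
  exists2 W, nbhs x W & forall (u : nat -> X) (y : X),
    (forall j, S (u j)) -> u @ \oo --> y -> W y -> S y.
Proof.
move=> [U [C [oU [cC ->]]]] [Ux _]; exists U; first exact: open_nbhs_nbhs.
move=> u y Su uy Uy; split=> //.
by apply: (closed_cvg _ cC _ _ uy); apply: nearW => j; case: (Su j).
Qed.

Hypothesis hausS : hausdorff_space (subspace S).

Lemma subspace_cvg_unique {u : nat -> X} {x y : X} :
  (forall j, S (u j)) -> S x -> S y -> u @ \oo --> x -> u @ \oo --> y ->
  y = x.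
Proof.
move=> Su Sx Sy ux uy.
exact: (cvg_unique hausS (cvg_subspace Su Sy uy) (cvg_subspace Su Sx ux)).
Qed.

Lemma locally_closed_isolated_seq_limits {u : nat -> X} {x : X} {A : set X} :
  locally_closed S -> (forall j, S (u j)) -> S x -> u @ \oo --> x -> A x ->
  isolated (seq_limits u `&` A) x.
Proof.
move=> lcS Su Sx ux Ax; split; first by rewrite inE.
have [W nbhsW WS] := locally_closed_cvg_nbhs lcS Sx.
exists W => //; apply/seteqP; split=> [y [Wy [uy _]]|y ->].
  exact: subspace_cvg_unique Su Sx (WS _ _ Su uy Wy) ux uy.
by split; [exact: nbhs_singleton|].
Qed.

End LocallyClosedHausdorff.

Theorem lemma3p1 (X : topologicalType) (X1 X2 : set X) :
  first_countable X ->
  X1 `&` X2 = set0 -> X1 `|` X2 = setT ->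
  (forall u : nat -> X, (forall j, X1 (u j)) -> (exists p : X, u @ \oo --> p) ->
     forall p : X, ~ isolated (seq_limits u `&` X2) p) ->
  forall S : set X, locally_closed S -> hausdorff_space (subspace S) ->
    rel_closed_in S (S `&` X1).
Proof.
move=> fcX _ coverX no_isolated S lcS hausS.
exists (closure (S `&` X1)); split; first exact: closed_closure.
apply/seteqP; split=> [x SX1x|x [Sx clx]].
  by split; [case: SX1x|exact: subset_closure].
split=> //; apply: contrapT => X1'x.
have X2x : X2 x by have := coverX; rewrite -subTset => /(_ x I) [].
have [u [SX1u ux]] := first_countable_closure_seq fcX clx.
have Su j : S (u j) by case: (SX1u j).
have X1u j : X1 (u j) by case: (SX1u j).
apply: (no_isolated u X1u (ex_intro _ x ux) x).
exact: (locally_closed_isolated_seq_limits hausS lcS Su Sx ux X2x).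
Qed.
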